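(* Let $(\Omega,+)$ be a group, $a,b$ subgroups, and $x,y\subseteq\Omega$ with $x\top b$, $y\top b$, $a\top x$, $a\top y$. Then for all $z\subseteq\Omega$, $\Sigma(b,x,y,z)=T^b_{x,y}(z)$ and $\check\Sigma(a,x,y,z)=\check T^a_{x,y}(z)$. Consequently, if also $u\top b$, then $T^b_{x,x}=\mathrm{id}_\Omega$ and $T^b_{x,u}\circ T^b_{u,y}=T^b_{x,y}$; thus $\{T^b_{x,y}: x,y\in{}^\top b\}$ is a group under composition, isomorphic as a torsor to ${}^\top b=\{x: x\top b\}$ with the torsor law $\Sigma(b,\cdot,\cdot,\cdot)$.
   Context: $(\Omega,+)$ is a group written additively but not necessarily abelian; sums/differences of maps $\Omega\to\Omega$ are pointwise, in the given order, and a map applied to a subset means its image. For subsets $u,v$, $u\top v$ means every $\omega$ has a unique decomposition $\omega=\mu+\nu$ with $\mu\in u,\nu\in v$; then $P^u_v(\omega):=\nu$ and $\check P^v_u(\omega):=\mu$. Define $T^b_{x,y}:=\mathrm{id}-P^x_b+P^y_b$ (i.e. $\omega\mapsto\omega-P^x_b(\omega)+P^y_b(\omega)$) and $\check T^a_{x,y}:=\check P^y_a-\check P^x_a+\mathrm{id}$. Also $\Sigma(b,x,y,z)=\{\omega:\exists\beta,\beta'\in b:\ \omega+\beta\in x,\ \omega+\beta'+\beta\in y,\ \omega+\beta'\in z\}$ and $\check\Sigma(a,x,y,z)=\{\omega:\exists\beta,\beta'\in a:\ \beta+\omega\in x,\ \beta+\beta'+\omega\in y,\ \beta'+\omega\in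 z\}$. *)

From Stdlib Require Import ClassicalEpsilon.

Set Implicit Arguments.

Section Defs.
Variable G : Type.
Variables (add : G -> G -> G) (opp : G -> G) (zero : G).

Record is_group : Prop := {
  grp_assoc : forall p q r, add p (add q r) = add (add p q) r;
  grp_add0 : forall p, add p zero = p;
  grp_0add : forall p, add zero p = p;
  grp_addN : forall p, add p (opp p) = zero;
  grp_Nadd : forall p, add (opp p) p = zero }.

Record is_subgroup (a : G -> Prop) : Prop := {
  sub_zero : a zero;
  sub_add : forall p q, a p -> a q -> a (add p q);
  sub_opp : forall p, a p -> a (opp p) }.

Definition top (u v : G -> Prop) : Prop :=
  forall w, exists m n, u m /\ v n /\ w = add m n /\
    forall m' n', u m' -> v n' -> w = add m' n' -> m' = m /\ n' = n.

(* P^u_v w := the v-component n of w = m + n (meaningful when u ⊤ v) *)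
Definition P (u v : G -> Prop) (w : G) : G :=
  epsilon (inhabits zero) (fun n => exists m, u m /\ v n /\ w = add m n).

(* check P^v_u w := the u-component m of w = m + n (meaningful when u ⊤ v) *)
Definition Pc (v u : G -> Prop) (w : G) : G :=
  epsilon (inhabits zero) (fun m => exists n, u m /\ v n /\ w = add m n).

Definition T (b x y : G -> Prop) (w : G) : G :=
  add (add w (opp (P x b w))) (P y b w).

Definition Tc (a x y : G -> Prop) (w : G) : G :=
  add (add (Pc y a w) (opp (Pc x a w))) w.

Definition Sigma (b x y z : G -> Prop) (w : G) : Prop :=
  exists be be', b be /\ b be' /\ x (add w be) /\ y (add (add w be') be) /\
    z (add w be').

Definition Sigmac (a x y z : G -> Prop) (w : G) : Prop :=
  exists be be', a be /\ a be' /\ x (add be w) /\ y (add (add be be') w) /\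
    z (add be' w).

Definition image (f : G -> G) (z : G -> Prop) (w : G) : Prop :=
  exists v, z v /\ f v = w.

End Defs.

(* For a subgroup b, the b-component of a decomposition along a transversal
   x ⊤ b shifts along b: P^x_b(ω + β) = P^x_b(ω) + β for β ∈ b, and it
   vanishes exactly on x.  Evaluating P^x_b and P^y_b at ω + β' by this shift
   rule turns the three membership conditions defining Σ(b,x,y,z) into
   ω = T^b_{x,y}(ω + β') with ω + β' ∈ z.  Each T^b_{x,y} commutes with right
   translation by b and has inverse T^b_{y,x}, so it maps a transversal z of b
   to a transversal whose projection is P^z_b ∘ T^b_{y,x}; this yields the
   torsor identities.  The statements about a are those about b in the
   opposite group. *)

From Stdlib Require Import ClassicalEpsilon Setoid.

Set Implicit Arguments.
Unset Strict Implicit.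

Lemma top_ext (G : Type) (add : G -> G -> G) (u u' v : G -> Prop) :
  (forall w, u w <-> u' w) -> top add u v -> top add u' v.
Proof.
  intros Eu Huv w. destruct (Huv w) as [m [n [Hm [Hn [Hw Huniq]]]]].
  exists m, n. split; [apply Eu; exact Hm | split; [exact Hn | split; [exact Hw |]]].
  intros m' n' Hm' Hn'. apply Huniq; [apply Eu; exact Hm' | exact Hn'].
Qed.

Section Group.
Variables (G : Type) (add : G -> G -> G) (opp : G -> G) (zero : G).
Hypothesis HG : is_group add opp zero.
Local Infix "+" := add.
Local Notation "- p" := (opp p).
Local Notation "p - q" := (add p (opp q)).

Lemma addA p q r : p + (q + r) = p + q + r.
Proof. apply (grp_assoc HG). Qed.

Lemma addr0 p : p + zero = p.
Proof. apply (grp_add0 HG). Qed.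

Lemma add0r p : zero + p = p.
Proof. apply (grp_0add HG). Qed.

Lemma addrN p : p - p = zero.
Proof. apply (grp_addN HG). Qed.

Lemma addNr p : - p + p = zero.
Proof. apply (grp_Nadd HG). Qed.

Lemma addNKr p q : p + (- p + q) = q.
Proof. now rewrite addA, addrN, add0r. Qed.

Lemma addKr p q : - p + (p + q) = q.
Proof. now rewrite addA, addNr, add0r. Qed.

Lemma addrK p q : q + p - p = q.
Proof. now rewrite <- addA, addrN, addr0. Qed.

Lemma addrNK p q : q - p + p = q.
Proof. now rewrite <- addA, addNr, addr0. Qed.

Lemma addIr p q r : q + p = r + p -> q = r.
Proof. intro E. now rewrite <- (addrK p q), E, addrK. Qed.

Lemma addrI p q r : p + q = p + r -> q = r.
Proof. intro E. now rewrite <- (addKr p q), E, addKr. Qed.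

Lemma oppK p : - - p = p.
Proof. apply (addrI (p := - p)). now rewrite addrN, addNr. Qed.

Lemma oppI p q : - p = - q -> p = q.
Proof. intro E. now rewrite <- (oppK p), E, oppK. Qed.

Lemma oppD p q : - (p + q) = - q - p.
Proof. apply (addrI (p := p + q)). now rewrite addrN, addA, addrK, addrN. Qed.

Lemma opp0 : - zero = zero.
Proof. rewrite <- (add0r (- zero)). apply addrN. Qed.

Section Transversal.
Variable b : G -> Prop.
Hypothesis Hb : is_subgroup add opp zero b.
Local Notation Pb x := (P add zero x b).
Local Notation Tb x y := (T add opp zero b x y).

Definition equivariant (f : G -> G) := forall w p, b p -> f (w + p) = f w + p.

Lemma P_spec x w : top add x b -> x (w - Pb x w) /\ b (Pb x w).
Proof.
  intro Hx. unfold P.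
  destruct (epsilon_spec (inhabits zero)
     (fun n => exists m, x m /\ b n /\ w = m + n)) as [m [Hm [Hn Hw]]].
  { destruct (Hx w) as [m [n [Hm [Hn [Hw _]]]]]. exists n, m. auto. }
  split; [|exact Hn]. now rewrite Hw at 1; rewrite addrK.
Qed.

Lemma P_eq x w m n : top add x b -> x m -> b n -> w = m + n -> Pb x w = n.
Proof.
  intros Hx Hm Hn Hw. destruct (P_spec w Hx) as [Hm' Hn'].
  destruct (Hx w) as [m0 [n0 [_ [_ [_ Huniq]]]]].
  destruct (Huniq _ _ Hm Hn Hw) as [_ E].
  destruct (Huniq _ _ Hm' Hn' (eq_sym (addrNK _ _))) as [_ E']. congruence.
Qed.

Lemma P_addr x w p : top add x b -> b p -> Pb x (w + p) = Pb x w + p.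
Proof.
  intros Hx Hp. destruct (P_spec w Hx) as [Hm Hn].
  apply (P_eq Hx Hm (sub_add Hb _ _ Hn Hp)). now rewrite addA, addrNK.
Qed.

Lemma P_eq0 x w : top add x b -> x w <-> Pb x w = zero.
Proof.
  intro Hx. split; intro H.
  - apply (P_eq Hx H (sub_zero Hb)). now rewrite addr0.
  - destruct (P_spec w Hx) as [Hw _]. now rewrite H, opp0, addr0 in Hw.
Qed.

Lemma P_diff_mem x y w : top add x b -> top add y b -> b (- Pb x w + Pb y w).
Proof.
  intros Hx Hy. apply (sub_add Hb); [apply (sub_opp Hb) |];
    apply (P_spec w); assumption.
Qed.

Lemma P_ext u u' w : top add u b -> (forall w, u w <-> u' w) -> Pb u' w = Pb u w.
Proof.
  intros Hu Eu. destruct (P_spec w Hu) as [Hm Hn].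
  apply (P_eq (top_ext Eu Hu) (proj1 (Eu _) Hm) Hn). now rewrite addrNK.
Qed.

Lemma TE x y w : Tb x y w = w + (- Pb x w + Pb y w).
Proof. unfold T. now rewrite addA. Qed.

Lemma T_equivariant x y : top add x b -> top add y b -> equivariant (Tb x y).
Proof.
  intros Hx Hy w p Hp. unfold T.
  rewrite (P_addr w Hx Hp), (P_addr w Hy Hp), oppD, (addA (w + p)), addrK, !addA.
  reflexivity.
Qed.

Lemma T_id x w : Tb x x w = w.
Proof. apply addrNK. Qed.

Lemma T_comp x u y w : top add x b -> top add u b -> top add y b ->
  Tb x u (Tb u y w) = Tb x y w.
Proof.
  intros Hx Hu Hy. rewrite (TE u y w), (T_equivariant Hx Hu _ (P_diff_mem w Hu Hy)).
  unfold T. now rewrite <- (addA (_ - _)), addNKr.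
Qed.

Lemma T_cancel x y w : top add x b -> top add y b -> Tb y x (Tb x y w) = w.
Proof. intros Hx Hy. now rewrite T_comp, T_id. Qed.

Lemma Sigma_T x y z w : top add x b -> top add y b ->
  Sigma add b x y z w <-> image (Tb x y) z w.
Proof.
  intros Hx Hy. split.
  - intros [be [be' [Hbe [Hbe' [Hx1 [Hy1 Hz1]]]]]]. exists (w + be'). split; [exact Hz1 |].
    assert (Px : Pb x (w + be') = - be + be').
    { replace (w + be') with (w + be + (- be + be')) by now rewrite <- addA, addNKr.
      rewrite (P_addr _ Hx (sub_add Hb _ _ (sub_opp Hb _ Hbe) Hbe')).
      now rewrite (proj1 (P_eq0 _ Hx) Hx1), add0r. }
    assert (Py : Pb y (w + be') = - be).
    { replace (w + be') with (w + be' + be - be) by now rewrite addrK.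
      rewrite (P_addr _ Hy (sub_opp Hb _ Hbe)).
      now rewrite (proj1 (P_eq0 _ Hy) Hy1), add0r. }
    now rewrite TE, Px, Py, oppD, oppK, addrK, addrK.
  - intros [v [Hz <-]]. destruct (P_spec v Hx) as [Hx1 Hxb].
    destruct (P_spec v Hy) as [Hy1 Hyb].
    assert (Hback : Tb x y v + (- Pb y v + Pb x v) = v).
    { now rewrite TE, <- addA, (addA (_ + _)), addrK, addNr, addr0. }
    exists (- Pb y v), (- Pb y v + Pb x v).
    split; [exact (sub_opp Hb _ Hyb) |].
    split; [exact (sub_add Hb _ _ (sub_opp Hb _ Hyb) Hxb) |].
    split; [now rewrite TE, addA, addrK |].
    split; [now rewrite Hback | now rewrite Hback].
Qed.

Lemma top_image z f g : top add z b -> equivariant f -> equivariant g ->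
  (forall w, g (f w) = w) -> (forall w, f (g w) = w) -> top add (image f z) b.
Proof.
  intros Hz Hf Hg gK fK w. destruct (Hz (g w)) as [m [n [Hm [Hn [Hw Huniq]]]]].
  exists (f m), n. split; [exists m; split; [exact Hm | reflexivity] |].
  split; [exact Hn |]. split; [now rewrite <- (Hf _ _ Hn), <- Hw, fK |].
  intros m' n' [v [Hv <-]] Hn' Hw'.
  destruct (Huniq v n' Hv Hn') as [-> ->]; [now rewrite Hw', Hg, gK | split; reflexivity].
Qed.

Lemma P_image z f g w : top add z b -> equivariant f -> equivariant g ->
  (forall w, g (f w) = w) -> (forall w, f (g w) = w) ->
  Pb (image f z) w = Pb z (g w).
Proof.
  intros Hz Hf Hg gK fK. destruct (P_spec (g w) Hz) as [Hm Hn].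
  apply (P_eq (top_image Hz Hf Hg gK fK) (m := f (g w - Pb z (g w))));
    [exists (g w - Pb z (g w)); split; [exact Hm | reflexivity] | exact Hn |].
  now rewrite <- (Hf _ _ Hn), addrNK, fK.
Qed.

Lemma top_image_T x y z : top add x b -> top add y b -> top add z b ->
  top add (image (Tb x y) z) b.
Proof.
  intros Hx Hy Hz. apply (top_image Hz (T_equivariant Hx Hy) (T_equivariant Hy Hx));
    intro w; apply T_cancel; assumption.
Qed.

Lemma P_image_T x y z w : top add x b -> top add y b -> top add z b ->
  Pb (image (Tb x y) z) w = Pb z (Tb y x w).
Proof.
  intros Hx Hy Hz. apply (P_image w Hz (T_equivariant Hx Hy) (T_equivariant Hy Hx));
    intro v; apply T_cancel; assumption.
Qed.

Lemma top_Sigma x y z : top add x b -> top add y b -> top add z b ->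
  top add (Sigma add b x y z) b.
Proof.
  intros Hx Hy Hz. apply (top_ext (u := image (Tb x y) z)).
  - intro w. symmetry. apply Sigma_T; assumption.
  - apply top_image_T; assumption.
Qed.

Lemma T_Sigma x0 x y z w : top add x0 b -> top add x b -> top add y b -> top add z b ->
  Tb (Sigma add b x y z) x0 w = Tb x y (Tb z x0 w).
Proof.
  intros H0 Hx Hy Hz.
  assert (PSigma : Pb (Sigma add b x y z) w = Pb z (Tb y x w)).
  { assert (ESigma : forall v, image (Tb x y) z v <-> Sigma add b x y z v).
    { intro v. symmetry. apply Sigma_T; assumption. }
    now rewrite (P_ext w (top_image_T Hx Hy Hz) ESigma), P_image_T. }
  rewrite (TE (Sigma _ _ _ _ _)), PSigma, (TE y x w), (P_addr _ Hz (P_diff_mem w Hy Hx)).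
  rewrite (TE z x0 w), (T_equivariant Hx Hy _ (P_diff_mem w Hz H0)), (TE x y w).
  now rewrite oppD, oppD, oppK, !addA.
Qed.

Lemma T_inj x0 x z : top add x0 b -> top add x b -> top add z b ->
  (forall w, Tb z x0 w = Tb x x0 w) -> forall w, z w <-> x w.
Proof.
  intros H0 Hx Hz E w.
  assert (EP : Pb z w = Pb x w).
  { apply oppI, (addrI (p := w)), (addIr (p := Pb x0 w)). apply E. }
  now rewrite (P_eq0 _ Hz), (P_eq0 _ Hx), EP.
Qed.

End Transversal.
End Group.

Section Opposite.
Variables (G : Type) (add : G -> G -> G) (opp : G -> G) (zero : G).
Hypothesis HG : is_group add opp zero.
Local Notation add_op := (fun p q => add q p).

Lemma is_group_opposite : is_group add_op opp zero.
Proof.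
  constructor; intros; simpl.
  - symmetry; apply (grp_assoc HG).
  - apply (grp_0add HG).
  - apply (grp_add0 HG).
  - apply (grp_Nadd HG).
  - apply (grp_addN HG).
Qed.

Lemma is_subgroup_opposite a :
  is_subgroup add opp zero a -> is_subgroup add_op opp zero a.
Proof. intros [H0 HD HN]. constructor; auto. Qed.

Lemma top_opposite u v : top add u v -> top add_op v u.
Proof.
  intros Huv w. destruct (Huv w) as [m [n [Hm [Hn [Hw Huniq]]]]].
  exists n, m. split; [exact Hn | split; [exact Hm | split; [exact Hw |]]].
  intros n' m' Hn' Hm' Hw'. destruct (Huniq m' n' Hm' Hn' Hw'). auto.
Qed.

Lemma Pc_opposite a x w : top add a x -> Pc add zero x a w = P add_op zero x a w.
Proof.
  intro Hax. unfold Pc at 1.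
  destruct (epsilon_spec (inhabits zero)
     (fun m => exists n, a m /\ x n /\ w = add m n)) as [n [Hm [Hn Hw]]].
  { destruct (Hax w) as [m [n [Hm [Hn [Hw _]]]]]. exists m, n. auto. }
  symmetry. exact (P_eq is_group_opposite (top_opposite Hax) Hn Hm Hw).
Qed.

Lemma Tc_opposite a x y : top add a x -> top add a y ->
  forall w, Tc add opp zero a x y w = T add_op opp zero a x y w.
Proof.
  intros Hx Hy w. unfold Tc, T. rewrite !(Pc_opposite w) by assumption.
  symmetry. apply (grp_assoc HG).
Qed.

Lemma Sigmac_opposite a x y z w : Sigmac add a x y z w <-> Sigma add_op a x y z w.
Proof. unfold Sigmac, Sigma. setoid_rewrite (grp_assoc HG). reflexivity. Qed.

Lemma Sigmac_Tc a x y z w : is_subgroup add opp zero a -> top add a x -> top add a y ->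
  Sigmac add a x y z w <-> image (Tc add opp zero a x y) z w.
Proof.
  intros Ha Hx Hy. unfold image. setoid_rewrite (Tc_opposite Hx Hy).
  rewrite Sigmac_opposite.
  exact (Sigma_T is_group_opposite (is_subgroup_opposite Ha) z w
           (top_opposite Hx) (top_opposite Hy)).
Qed.

End Opposite.

Theorem lemma6p5 (G : Type) (add : G -> G -> G) (opp : G -> G) (zero : G)
  (HG : is_group add opp zero) (a b x y : G -> Prop)
  (Ha : is_subgroup add opp zero a) (Hb : is_subgroup add opp zero b)
  (Hxb : top add x b) (Hyb : top add y b)
  (Hax : top add a x) (Hay : top add a y) :
  (forall z : G -> Prop,
     (forall w, Sigma add b x y z w <-> image (T add opp zero b x y) z w) /\
     (forall w, Sigmac add a x y z w <-> image (Tc add opp zero a x y) z w)) /\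
  (forall u : G -> Prop, top add u b ->
     (forall w, T add opp zero b x x w = w) /\
     (forall w, T add opp zero b x u (T add opp zero b u y w)
                = T add opp zero b x y w)) /\
  (forall x0 x1 y1 z : G -> Prop, top add x0 b -> top add x1 b ->
     top add y1 b -> top add z b ->
     top add (Sigma add b x1 y1 z) b /\
     (forall w, T add opp zero b (Sigma add b x1 y1 z) x0 w
                = T add opp zero b x1 y1 (T add opp zero b z x0 w)) /\
     (forall w, T add opp zero b x1 y1 w
                = T add opp zero b (Sigma add b x1 y1 x0) x0 w) /\
     ((forall w, T add opp zero b z x0 w = T add opp zero b x1 x0 w) ->
        forall w, z w <-> x1 w)).
Proof.
  split; [|split].
  - intro z. split; intro w.
    + exact (Sigma_T HG Hb z w Hxb Hyb).
    + exact (Sigmac_Tc HG z w Ha Hax Hay).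
  - intros u Hu. split; intro w.
    + exact (T_id HG b x w).
    + exact (T_comp HG Hb w Hxb Hu Hyb).
  - intros x0 x1 y1 z H0 H1 H2 Hz. split; [|split; [|split]].
    + exact (top_Sigma HG Hb H1 H2 Hz).
    + intro w. exact (T_Sigma HG Hb w H0 H1 H2 Hz).
    + intro w. now rewrite (T_Sigma HG Hb w H0 H1 H2 H0), T_id.
    + exact (T_inj HG Hb H0 H1 Hz).
Qed.
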